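(* If $G\subset\mathbb{R}^2$ is (the open domain bounded by) a rhombus with smallest angle $\alpha$, then \[ A_G\ge\frac{2}{\sin\frac{\alpha}{2}}. \]
   Context: For a domain $G\subsetneq\mathbb{R}^n$ let $d_G(x)=d(x,\partial G)$; $k_G(x,y)=\inf_\gamma\int_\gamma\frac{|dx|}{d_G(x)}$ over rectifiable curves $\gamma\subset G$ joining $x,y$ (quasihyperbolic distance); $j_G(x,y)=\log\left(1+\frac{|x-y|}{\min\{d_G(x),d_G(y)\}}\right)$; and the uniformity constant is $A_G=\inf\{A\ge1: k_G\le A\,j_G\text{ on }G\times G\}$ (with $\inf\emptyset=+\infty$). *)

From Stdlib Require Import Reals Lra ClassicalEpsilon.
Open Scope R_scope.

Definition pt := (R * R)%type.

Definition dist (p q : pt) : R :=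
  sqrt ((fst p - fst q) ^ 2 + (snd p - snd q) ^ 2).

(* greatest lower bound of a set of reals; an arbitrary value if none exists *)
Definition is_glb (E : R -> Prop) (m : R) : Prop :=
  (forall x, E x -> m <= x) /\ (forall b, (forall x, E x -> b <= x) -> b <= m).

Definition Rinf (E : R -> Prop) : R :=
  epsilon (inhabits 0) (fun m => is_glb E m).

Definition boundary (G : pt -> Prop) (z : pt) : Prop :=
  (forall eps, 0 < eps -> exists w, G w /\ dist w z < eps) /\
  (forall eps, 0 < eps -> exists w, ~ G w /\ dist w z < eps).

Definition dG (G : pt -> Prop) (x : pt) : R :=
  Rinf (fun r => exists z, boundary G z /\ r = dist x z).

Fixpoint rsum (f : nat -> R) (n : nat) : R :=
  match n with O => 0 | S m => rsum f m + f m end.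

Definition partition (a b : R) (p : nat -> R) (n : nat) : Prop :=
  p O = a /\ p n = b /\ (forall i, (i < n)%nat -> p i <= p (S i)).

Definition poly_length (g : R -> pt) (p : nat -> R) (n : nat) : R :=
  rsum (fun i => dist (g (p (S i))) (g (p i))) n.

(* L is the length of the curve g restricted to [a,b] (sup of inscribed
   polygonal lengths); existence of such L = rectifiability *)
Definition is_length (g : R -> pt) (a b L : R) : Prop :=
  a <= b /\
  is_lub (fun l => exists p n, partition a b p n /\ l = poly_length g p n) L.

Definition continuous_on (g : R -> pt) (a b : R) : Prop :=
  forall t, a <= t <= b -> forall eps, 0 < eps ->
    exists delta, 0 < delta /\
      forall u, a <= u <= b -> Rabs (u - t) < delta -> dist (g u) (g t) < eps.

(* line integral with respect to arc length:  I = \int_gamma f |dx|,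
   defined through the arc-length parametrization g0 of gamma
   (g0 (s_gamma(t)) = gamma t, s_gamma(t) = length of gamma on [a,t])
   as  \int_0^L f (g0 s) ds. *)
Definition line_integral (f : pt -> R) (g : R -> pt) (a b I : R) : Prop :=
  exists L, is_length g a b L /\
  exists g0 : R -> pt,
    (forall t s, a <= t <= b -> is_length g a t s -> g0 s = g t) /\
    exists pr : Riemann_integrable (fun s => f (g0 s)) 0 L, RiemannInt pr = I.

Definition qh_length_of_curve (G : pt -> Prop) (x y : pt) (I : R) : Prop :=
  exists (g : R -> pt) (a b : R),
    a <= b /\ continuous_on g a b /\
    (forall t, a <= t <= b -> G (g t)) /\ g a = x /\ g b = y /\
    line_integral (fun z => 1 / dG G z) g a b I.

Definition kG (G : pt -> Prop) (x y : pt) : R :=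
  Rinf (qh_length_of_curve G x y).

Definition jG (G : pt -> Prop) (x y : pt) : R :=
  ln (1 + dist x y / Rmin (dG G x) (dG G y)).

(* A belongs to the set whose infimum is the uniformity constant A_G *)
Definition uniformity_bound (G : pt -> Prop) (A : R) : Prop :=
  1 <= A /\ forall x y, G x -> G y -> kG G x y <= A * jG G x y.

(* Open rhombus with vertices P, P+u, P+u+v, P+v  (|u| = |v| > 0,
   u, v linearly independent). *)
Definition rhombus (P u v : pt) (z : pt) : Prop :=
  exists s t, 0 < s < 1 /\ 0 < t < 1 /\
    z = (fst P + s * fst u + t * fst v, snd P + s * snd u + t * snd v).

Definition norm2 (u : pt) : R := sqrt (fst u ^ 2 + snd u ^ 2).
Definition dot (u v : pt) : R := fst u * fst v + snd u * snd v.
Definition det (u v : pt) : R := fst u * snd v - snd u * fst v.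

From Pilot Require Import Defs.
From Stdlib Require Import Reals Lra Lia Rgeom.
From Stdlib Require Import ClassicalEpsilon Classical FunctionalExtensionality PropExtensionality.
From Coquelicot Require Import Coquelicot.
Import Pilot.Defs.
Open Scope R_scope.

(* Let P and Q be the vertices of the two acute angles alpha and, for small tau > 0, let x and
   y be the points of the diagonal PQ at distance tau |PQ| from P and from Q.  Inside the
   rhombus d_G(z) <= sin(alpha/2) |z - P| and d_G(z) <= sin(alpha/2) |z - Q|, so integrating
   along a curve from x to y parametrised by arc length, its first half from the P end and
   its second half from the Q end, gives k_G(x, y) >= 2/sin(alpha/2) * log (1/(2 tau)).
   On the other hand d_G(x), d_G(y) >= c tau for a constant c > 0, hence
   j_G(x, y) <= log (1/tau) + O(1), and letting tau -> 0 yields A_G >= 2/sin(alpha/2).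
   If the angle at the given base vertex is obtuse, the base is first moved to an adjacent
   vertex. *)

Lemma dist_euc_dist p q : dist p q = dist_euc (fst p) (snd p) (fst q) (snd q).
Proof. unfold dist, dist_euc, Rsqr. f_equal. ring. Qed.

Lemma dist_ge0 p q : 0 <= dist p q.
Proof. apply sqrt_pos. Qed.

Lemma dist_sym p q : dist p q = dist q p.
Proof. rewrite !dist_euc_dist. apply distance_symm. Qed.

Lemma dist_xx p : dist p p = 0.
Proof. rewrite dist_euc_dist. apply distance_refl. Qed.

Lemma dist_triangle p q r : dist p r <= dist p q + dist q r.
Proof. rewrite !dist_euc_dist. apply triangle. Qed.

Lemma dist_gt0 p q : p <> q -> 0 < dist p q.
Proof.
  intros Hpq. destruct (dist_ge0 p q) as [|H0]; auto. exfalso. apply Hpq.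
  destruct p as [p1 p2], q as [q1 q2]. unfold dist in H0. cbn [fst snd] in H0.
  pose proof (pow2_ge_0 (p1 - q1)); pose proof (pow2_ge_0 (p2 - q2)).
  symmetry in H0. apply sqrt_eq_0 in H0; [|lra]. f_equal; nra.
Qed.

Lemma sqrt_sq_mult k X : 0 <= X -> sqrt (k ^ 2 * X) = Rabs k * sqrt X.
Proof. intros. rewrite sqrt_mult by nra. f_equal. rewrite <- sqrt_Rsqr_abs. unfold Rsqr. f_equal; ring. Qed.

Lemma Rinf_glb (E : R -> Prop) :
  (exists x, E x) -> (exists m, forall x, E x -> m <= x) -> is_glb E (Rinf E).
Proof.
  intros [x0 Hx0] [m Hm].
  assert (Hex : exists g, is_glb E g).
  { destruct (completeness (fun y => E (- y))) as [M [HM1 HM2]].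
    - exists (- m). intros y Hy. apply Hm in Hy. lra.
    - exists (- x0). rewrite Ropp_involutive. auto.
    - exists (- M). split.
      + intros x Hx. assert (- x <= M) by (apply HM1; rewrite Ropp_involutive; auto). lra.
      + intros b Hb. assert (M <= - b) by (apply HM2; intros y Hy; apply Hb in Hy; lra). lra. }
  exact (epsilon_spec (inhabits 0) (fun m => is_glb E m) Hex).
Qed.

Lemma is_lub_approx E m eps : is_lub E m -> 0 < eps -> exists x, E x /\ m - eps < x.
Proof.
  intros [H1 H2] He. apply NNPP. intros Hn.
  assert (m <= m - eps); [|lra].
  apply H2. intros x Hx. apply Rnot_lt_le. intros Hl. apply Hn. exists x. auto.
Qed.

Lemma rsum_le f g n : (forall i, (i < n)%nat -> f i <= g i) -> rsum f n <= rsum g n.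
Proof.
  induction n as [|n IH]; simpl; intros H; [lra|].
  assert (rsum f n <= rsum g n) by (apply IH; intros; apply H; lia).
  assert (f n <= g n) by (apply H; lia). lra.
Qed.

Lemma rsum_plus f g n : rsum (fun i => f i + g i) n = rsum f n + rsum g n.
Proof. induction n as [|n IH]; simpl; [ring|]. rewrite IH. ring. Qed.

Lemma rsum_const c n : rsum (fun _ => c) n = INR n * c.
Proof. induction n as [|n IH]; simpl rsum; [simpl; ring|]. rewrite IH, S_INR. ring. Qed.

Lemma rsum_ext f g n : (forall i, (i < n)%nat -> f i = g i) -> rsum f n = rsum g n.
Proof.
  induction n as [|n IH]; simpl; intros H; auto.
  rewrite IH by (intros; apply H; lia). rewrite H by lia. auto.
Qed.

Lemma rsum_add f n m : rsum f (n + m) = rsum f n + rsum (fun i => f (n + i)%nat) m.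
Proof.
  induction m as [|m IH]; simpl; [rewrite Nat.add_0_r; ring|].
  rewrite Nat.add_succ_r. simpl. rewrite IH. ring.
Qed.

Lemma partition_mono c d p n :
  partition c d p n -> forall i j, (i <= j <= n)%nat -> p i <= p j.
Proof.
  intros [_ [_ H]] i j. induction j as [|j IH]; intros Hij.
  - replace i with 0%nat by lia. lra.
  - destruct (Nat.eq_dec i (S j)) as [->|]; [lra|].
    assert (p i <= p j) by (apply IH; lia). assert (p j <= p (S j)) by (apply H; lia). lra.
Qed.

Lemma partition_range c d p n : partition c d p n -> forall i, (i <= n)%nat -> c <= p i <= d.
Proof.
  intros Hp i Hi. pose proof (partition_mono _ _ _ _ Hp) as Hm. destruct Hp as [H0 [Hn _]].
  rewrite <- H0, <- Hn. split; apply Hm; lia.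
Qed.

Definition partition_concat (p q : nat -> R) (n : nat) : nat -> R :=
  fun i => if (i <=? n)%nat then p i else q (i - n)%nat.

Lemma partition_concatP c d e p n q m : partition c d p n -> partition d e q m ->
  partition c e (partition_concat p q n) (n + m).
Proof.
  intros [Hp0 [Hpn Hp]] [Hq0 [Hqm Hq]]. unfold partition_concat. split; [|split].
  - simpl. auto.
  - destruct (Nat.leb_spec (n + m) n).
    + replace m with 0%nat in * by lia. rewrite Nat.add_0_r. congruence.
    + replace (n + m - n)%nat with m by lia. auto.
  - intros i Hi. destruct (Nat.leb_spec i n); destruct (Nat.leb_spec (S i) n).
    + apply Hp; lia.
    + replace i with n by lia. replace (S n - n)%nat with 1%nat by lia.
      rewrite Hpn, <- Hq0. destruct m; [lia|]. apply Hq; lia.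
    + lia.
    + replace (S i - n)%nat with (S (i - n)) by lia. apply Hq; lia.
Qed.

Lemma poly_length_concat g p n q m : p n = q O ->
  poly_length g (partition_concat p q n) (n + m) = poly_length g p n + poly_length g q m.
Proof.
  intros Hpq. unfold poly_length. rewrite rsum_add. f_equal; apply rsum_ext; intros i Hi;
    unfold partition_concat.
  - destruct (Nat.leb_spec i n); destruct (Nat.leb_spec (S i) n); try lia. auto.
  - destruct (Nat.leb_spec (S (n + i)) n); try lia.
    replace (S (n + i) - n)%nat with (S i) by lia.
    destruct (Nat.leb_spec (n + i) n).
    + replace i with 0%nat by lia. rewrite Nat.add_0_r, Hpq. auto.
    + replace (n + i - n)%nat with i by lia. auto.
Qed.

Definition partition1 (c d : R) : nat -> R := fun i => if (i =? 0)%nat then c else d.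

Lemma partition1P c d : c <= d -> partition c d (partition1 c d) 1.
Proof.
  intros H. unfold partition1. split; [|split]; simpl; auto.
  intros i Hi. replace i with 0%nat by lia. auto.
Qed.

Lemma poly_length1 g c d : poly_length g (partition1 c d) 1 = dist (g d) (g c).
Proof. unfold poly_length, partition1. simpl. ring. Qed.

Lemma partition_min c e d p n : c <= d <= e -> partition c e p n ->
  partition c d (fun i => Rmin (p i) d) n.
Proof.
  intros Hd [H0 [Hn H]]. split; [|split].
  - rewrite H0. apply Rmin_left. lra.
  - rewrite Hn. apply Rmin_right. lra.
  - intros i Hi. specialize (H i Hi). unfold Rmin. do 2 destruct Rle_dec; lra.
Qed.

Lemma partition_max c e d p n : c <= d <= e -> partition c e p n ->
  partition d e (fun i => Rmax (p i) d) n.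
Proof.
  intros Hd [H0 [Hn H]]. split; [|split].
  - rewrite H0. apply Rmax_right. lra.
  - rewrite Hn. apply Rmax_left. lra.
  - intros i Hi. specialize (H i Hi). unfold Rmax. do 2 destruct Rle_dec; lra.
Qed.

Lemma poly_length_split_le g c e d p n : c <= d <= e -> partition c e p n ->
  poly_length g p n <=
  poly_length g (fun i => Rmin (p i) d) n + poly_length g (fun i => Rmax (p i) d) n.
Proof.
  intros Hd [H0 [Hn H]]. unfold poly_length. rewrite <- rsum_plus. apply rsum_le.
  intros i Hi. specialize (H i Hi). unfold Rmin, Rmax.
  destruct (Rle_dec (p i) d); destruct (Rle_dec (p (S i)) d).
  - rewrite dist_xx. lra.
  - destruct (Req_dec (p i) d) as [->|].
    + rewrite dist_xx. lra.
    + rewrite Rplus_comm. apply dist_triangle.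
  - lra.
  - rewrite dist_xx. lra.
Qed.

Lemma poly_length_perturb g p q n eta :
  (forall i, (i <= n)%nat -> dist (g (p i)) (g (q i)) <= eta) ->
  poly_length g p n <= poly_length g q n + INR n * (2 * eta).
Proof.
  intros H. unfold poly_length. rewrite <- rsum_const, <- rsum_plus. apply rsum_le.
  intros i Hi.
  pose proof (dist_triangle (g (p (S i))) (g (q (S i))) (g (p i))).
  pose proof (dist_triangle (g (q (S i))) (g (q i)) (g (p i))).
  pose proof (H (S i) ltac:(lia)). pose proof (H i ltac:(lia)).
  rewrite (dist_sym (g (q i))) in *. lra.
Qed.

Definition inscribed_lengths (g : R -> pt) (c d : R) : R -> Prop :=
  fun l => exists p n, partition c d p n /\ l = poly_length g p n.

Definition arc_length (g : R -> pt) (c d : R) : R :=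
  epsilon (inhabits 0) (is_lub (inscribed_lengths g c d)).

Lemma INR_mul_small n eps :
  0 < eps -> INR n * (2 * (2 * (eps / (8 * (INR n + 1))))) <= eps / 2.
Proof.
  intros He. pose proof (pos_INR n).
  replace (INR n * (2 * (2 * (eps / (8 * (INR n + 1))))))
    with (eps / 2 * (INR n / (INR n + 1))) by (field; lra).
  assert (INR n / (INR n + 1) <= 1).
  { apply Rmult_le_reg_r with (INR n + 1); [lra|]. field_simplify; lra. }
  assert (0 <= INR n / (INR n + 1)) by (apply Rdiv_le_0_compat; lra). nra.
Qed.

Definition clamp (a b t : R) : R := Rmax a (Rmin t b).

Lemma clamp_in a b t : a <= b -> a <= clamp a b t <= b.
Proof. intros. unfold clamp, Rmax, Rmin. repeat destruct Rle_dec; lra. Qed.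

Lemma clamp_id a b t : a <= t <= b -> clamp a b t = t.
Proof. intros. unfold clamp, Rmax, Rmin. repeat destruct Rle_dec; lra. Qed.

Lemma clamp_lipschitz a b t t' : a <= b -> Rabs (clamp a b t - clamp a b t') <= Rabs (t - t').
Proof.
  intros. unfold clamp, Rmax, Rmin. repeat destruct Rle_dec;
  unfold Rabs; repeat destruct Rcase_abs; lra.
Qed.

Section ArcLength.

Variables (g : R -> pt) (a b L : R).
Hypothesis HL : is_length g a b L.

Let Hab : a <= b. Proof. apply HL. Qed.

Lemma inscribed_le_length c d l :
  a <= c -> c <= d -> d <= b -> inscribed_lengths g c d l -> l <= L.
Proof.
  intros Hac Hcd Hdb [p [n [Hp ->]]].
  assert (Hq : partition c b (partition_concat p (partition1 d b) n) (n + 1))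
    by (apply partition_concatP with d; auto; apply partition1P; auto).
  assert (Hr : partition a b (partition_concat (partition1 a c)
                 (partition_concat p (partition1 d b) n) 1) (1 + (n + 1)))
    by (apply partition_concatP with c; auto; apply partition1P; auto).
  pose proof (proj1 (proj2 HL) _ (ex_intro _ _ (ex_intro _ _ (conj Hr eq_refl)))) as Hl.
  destruct Hp as [Hp0 [Hpn _]].
  rewrite !poly_length_concat, !poly_length1 in Hl
    by (unfold partition1, partition_concat; simpl; auto).
  pose proof (dist_ge0 (g c) (g a)). pose proof (dist_ge0 (g b) (g d)). lra.
Qed.

Lemma arc_length_lub c d : a <= c -> c <= d -> d <= b ->
  is_lub (inscribed_lengths g c d) (arc_length g c d).
Proof.
  intros Hac Hcd Hdb.
  assert (Hex : exists m, is_lub (inscribed_lengths g c d) m).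
  { destruct (completeness (inscribed_lengths g c d)) as [m Hm].
    - exists L. intros l Hl. eapply inscribed_le_length; eauto.
    - exists (poly_length g (partition1 c d) 1), (partition1 c d), 1%nat.
      split; auto. apply partition1P; auto.
    - exists m; auto. }
  exact (epsilon_spec (inhabits 0) _ Hex).
Qed.

Lemma is_length_arc_length t : a <= t <= b -> is_length g a t (arc_length g a t).
Proof. intros Ht. split; [lra|]. apply arc_length_lub; lra. Qed.

Lemma chord_le_arc_length c d : a <= c -> c <= d -> d <= b ->
  dist (g d) (g c) <= arc_length g c d.
Proof.
  intros Hac Hcd Hdb. rewrite <- poly_length1.
  apply (arc_length_lub c d Hac Hcd Hdb). exists (partition1 c d), 1%nat.
  split; auto. apply partition1P; auto.
Qed.

Lemma arc_length_aa : arc_length g a a = 0.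
Proof.
  destruct (arc_length_lub a a (Rle_refl a) (Rle_refl a) Hab) as [H1 H2].
  apply Rle_antisym.
  - apply H2. intros l [p [n [Hp ->]]]. unfold poly_length.
    assert (Hpa : forall i, (i <= n)%nat -> p i = a)
      by (intros i Hi; pose proof (partition_range _ _ _ _ Hp i Hi); lra).
    rewrite (rsum_ext _ (fun _ => 0)), rsum_const; [lra|].
    intros i Hi. rewrite (Hpa (S i)), (Hpa i) by lia. apply dist_xx.
  - rewrite <- (dist_xx (g a)). apply chord_le_arc_length; lra.
Qed.

Lemma arc_length_ab : arc_length g a b = L.
Proof. apply (is_lub_u (inscribed_lengths g a b)); [apply arc_length_lub; lra | apply HL]. Qed.

Lemma arc_length_additive t : a <= t <= b -> arc_length g a t + arc_length g t b = L.
Proof.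
  intros Ht.
  destruct (arc_length_lub a t (Rle_refl a) (proj1 Ht) (proj2 Ht)) as [A1 A2].
  destruct (arc_length_lub t b (proj1 Ht) (proj2 Ht) (Rle_refl b)) as [B1 B2].
  destruct HL as [_ [HU HLub]]. apply Rle_antisym.
  - assert (arc_length g t b <= L - arc_length g a t); [|lra].
    apply B2. intros l [q [m [Hq ->]]].
    assert (arc_length g a t <= L - poly_length g q m); [|lra].
    apply A2. intros l [p [n [Hp ->]]].
    assert (Hpq : p n = q O) by (destruct Hp as [_ [-> _]], Hq as [-> _]; auto).
    assert (poly_length g (partition_concat p q n) (n + m) <= L).
    { apply HU. exists (partition_concat p q n), (n + m)%nat.
      split; auto. apply partition_concatP with t; auto. }
    rewrite poly_length_concat in H by exact Hpq. lra.
  - apply HLub. intros l [p [n [Hp ->]]].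
    eapply Rle_trans; [apply (poly_length_split_le g a b t p n Ht Hp)|].
    apply Rplus_le_compat.
    + apply A1. exists (fun i => Rmin (p i) t), n. split; auto.
      apply partition_min with b; auto.
    + apply B1. exists (fun i => Rmax (p i) t), n. split; auto.
      apply partition_max with a; auto.
Qed.

Lemma arc_length_mono t1 t2 : a <= t1 -> t1 <= t2 -> t2 <= b ->
  arc_length g a t1 <= arc_length g a t2.
Proof.
  intros H1 H2 H3.
  destruct (arc_length_lub a t1 (Rle_refl a) H1 ltac:(lra)) as [_ A2].
  destruct (arc_length_lub a t2 (Rle_refl a) ltac:(lra) H3) as [B1 _].
  apply A2. intros l [p [n [Hp ->]]].
  assert (Hpt : p n = partition1 t1 t2 O) by (destruct Hp as [_ [-> _]]; auto).
  assert (poly_length g (partition_concat p (partition1 t1 t2) n) (n + 1) <= arc_length g a t2).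
  { apply B1. eexists _, _. split; eauto.
    apply partition_concatP with t1; auto. apply partition1P; auto. }
  rewrite poly_length_concat, poly_length1 in H by exact Hpt.
  pose proof (dist_ge0 (g t2) (g t1)). lra.
Qed.

Hypothesis Hcont : Defs.continuous_on g a b.

Lemma arc_length_right_approx t0 eps : a <= t0 <= b -> 0 < eps ->
  exists delta, 0 < delta /\ forall t, t0 <= t <= b -> t - t0 < delta ->
    arc_length g t0 b - eps <= arc_length g t b.
Proof.
  intros Ht0 He.
  destruct (is_lub_approx _ _ (eps / 2)
              (arc_length_lub t0 b (proj1 Ht0) (proj2 Ht0) (Rle_refl b)) ltac:(lra))
    as [l [[Q [n [HQ ->]]] Hl]].
  set (e' := eps / (8 * (INR n + 1))).
  assert (He' : 0 < e') by (unfold e'; pose proof (pos_INR n); apply Rdiv_lt_0_compat; lra).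
  destruct (Hcont t0 Ht0 e' He') as [delta [Hd Hdel]].
  exists delta. split; auto. intros t Ht Htd.
  assert (Hin : poly_length g (fun i => Rmax (Q i) t) n <= arc_length g t b).
  { apply (arc_length_lub t b ltac:(lra) (proj2 Ht) (Rle_refl b)).
    exists (fun i => Rmax (Q i) t), n. split; auto. apply partition_max with t0; auto. }
  assert (Hp : poly_length g Q n <=
               poly_length g (fun i => Rmax (Q i) t) n + INR n * (2 * (2 * e'))).
  { apply poly_length_perturb. intros i Hi. pose proof (partition_range _ _ _ _ HQ i Hi).
    unfold Rmax. destruct (Rle_dec (Q i) t).
    - pose proof (dist_triangle (g (Q i)) (g t0) (g t)).
      assert (dist (g (Q i)) (g t0) < e') by (apply Hdel; [lra | rewrite Rabs_right; lra]).
      assert (dist (g t) (g t0) < e') by (apply Hdel; [lra | rewrite Rabs_right; lra]).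
      rewrite (dist_sym (g t0)) in *. lra.
    - rewrite dist_xx. lra. }
  pose proof (INR_mul_small n eps He) as Hsmall. fold e' in Hsmall. lra.
Qed.

Lemma arc_length_left_approx t0 eps : a <= t0 <= b -> 0 < eps ->
  exists delta, 0 < delta /\ forall t, a <= t <= t0 -> t0 - t < delta ->
    arc_length g a t0 - eps <= arc_length g a t.
Proof.
  intros Ht0 He.
  destruct (is_lub_approx _ _ (eps / 2)
              (arc_length_lub a t0 (Rle_refl a) (proj1 Ht0) (proj2 Ht0)) ltac:(lra))
    as [l [[Q [n [HQ ->]]] Hl]].
  set (e' := eps / (8 * (INR n + 1))).
  assert (He' : 0 < e') by (unfold e'; pose proof (pos_INR n); apply Rdiv_lt_0_compat; lra).
  destruct (Hcont t0 Ht0 e' He') as [delta [Hd Hdel]].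
  exists delta. split; auto. intros t Ht Htd.
  assert (Hin : poly_length g (fun i => Rmin (Q i) t) n <= arc_length g a t).
  { apply (arc_length_lub a t (Rle_refl a) (proj1 Ht) ltac:(lra)).
    exists (fun i => Rmin (Q i) t), n. split; auto. apply partition_min with t0; auto. }
  assert (Hp : poly_length g Q n <=
               poly_length g (fun i => Rmin (Q i) t) n + INR n * (2 * (2 * e'))).
  { apply poly_length_perturb. intros i Hi. pose proof (partition_range _ _ _ _ HQ i Hi).
    unfold Rmin. destruct (Rle_dec (Q i) t).
    - rewrite dist_xx. lra.
    - pose proof (dist_triangle (g (Q i)) (g t0) (g t)).
      assert (dist (g (Q i)) (g t0) < e') by (apply Hdel; [lra | rewrite Rabs_left1; lra]).
      assert (dist (g t) (g t0) < e') by (apply Hdel; [lra | rewrite Rabs_left1; lra]).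
      rewrite (dist_sym (g t0)) in *. lra. }
  pose proof (INR_mul_small n eps He) as Hsmall. fold e' in Hsmall. lra.
Qed.

Lemma arc_length_continuous t0 eps : a <= t0 <= b -> 0 < eps ->
  exists delta, 0 < delta /\ forall t, a <= t <= b -> Rabs (t - t0) < delta ->
    Rabs (arc_length g a t - arc_length g a t0) <= eps.
Proof.
  intros Ht0 He.
  destruct (arc_length_right_approx t0 eps Ht0 He) as [d1 [Hd1 H1]].
  destruct (arc_length_left_approx t0 eps Ht0 He) as [d2 [Hd2 H2]].
  exists (Rmin d1 d2). split; [apply Rmin_pos; auto|]. intros t Ht Htd.
  pose proof (Rmin_l d1 d2). pose proof (Rmin_r d1 d2).
  destruct (Rle_dec t0 t).
  - rewrite Rabs_right in Htd by lra. specialize (H1 t ltac:(lra) ltac:(lra)).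
    pose proof (arc_length_additive t Ht). pose proof (arc_length_additive t0 Ht0).
    pose proof (arc_length_mono t0 t ltac:(lra) r ltac:(lra)).
    rewrite Rabs_right; lra.
  - rewrite Rabs_left1 in Htd by lra. specialize (H2 t ltac:(lra) ltac:(lra)).
    pose proof (arc_length_mono t t0 ltac:(lra) ltac:(lra) ltac:(lra)).
    rewrite Rabs_left1; lra.
Qed.

Lemma arc_length_ivt s : 0 <= s <= L -> exists t, a <= t <= b /\ arc_length g a t = s.
Proof.
  intros Hs.
  set (F := fun t => arc_length g a (clamp a b t)).
  assert (HF : continuity F).
  { intros x0. unfold continuity_pt, continue_in, limit1_in, limit_in. simpl. unfold R_dist.
    intros eps He.
    destruct (arc_length_continuous (clamp a b x0) (eps / 2) (clamp_in a b x0 Hab) ltac:(lra))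
      as [d [Hd H]].
    exists d. split; auto. intros x [_ Hx]. unfold F.
    enough (Rabs (arc_length g a (clamp a b x) - arc_length g a (clamp a b x0)) <= eps / 2) by lra.
    apply H; [apply clamp_in; auto|]. eapply Rle_lt_trans; [apply clamp_lipschitz|]; auto. }
  assert (Fa : F a = 0) by (unfold F; rewrite clamp_id by lra; apply arc_length_aa).
  assert (Fb : F b = L) by (unfold F; rewrite clamp_id by lra; apply arc_length_ab).
  destruct (IVT_gen F a b s HF) as [t [Ht Hts]].
  { rewrite Fa, Fb, Rmin_left, Rmax_right; lra. }
  rewrite Rmin_left, Rmax_right in Ht by lra.
  exists t. split; auto. unfold F in Hts. rewrite clamp_id in Hts; auto.
Qed.

End ArcLength.

Lemma qh_curve_arc_param G x y I : qh_length_of_curve G x y I ->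
  exists L (g0 : R -> pt) (pr : Riemann_integrable (fun s => 1 / dG G (g0 s)) 0 L),
    RiemannInt pr = I /\ dist x y <= L /\
    forall s, 0 <= s <= L -> G (g0 s) /\ dist (g0 s) x <= s /\ dist (g0 s) y <= L - s.
Proof.
  intros [g [a [b [Hab [Hc [HG [<- [<- [L [HL [g0 [Hg0 [pr Hpr]]]]]]]]]]]]].
  exists L, g0, pr. split; auto. split.
  { rewrite <- (arc_length_ab g a b L HL), dist_sym. apply (chord_le_arc_length g a b L HL); lra. }
  intros s Hs. destruct (arc_length_ivt g a b L HL Hc s Hs) as [t [Ht <-]].
  rewrite (Hg0 t _ Ht (is_length_arc_length g a b L HL t Ht)). split; [apply HG; auto|]. split.
  - apply (chord_le_arc_length g a b L HL); lra.
  - rewrite dist_sym. pose proof (chord_le_arc_length g a b L HL t b ltac:(lra) ltac:(lra) (Rle_refl b)).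
    pose proof (arc_length_additive g a b L HL t Ht). lra.
Qed.

Lemma is_RInt_inv_shift_incr S r c : 0 < S -> 0 < r -> 0 <= c ->
  is_RInt (fun s => 1 / (S * (r + s))) 0 c (ln (r + c) / S - ln r / S).
Proof.
  intros HS Hr Hc.
  replace (ln (r + c) / S - ln r / S)
    with (minus ((fun s => ln (r + s) / S) c) ((fun s => ln (r + s) / S) 0))
    by (unfold minus, plus, opp; simpl; rewrite Rplus_0_r; ring).
  apply (is_RInt_derive (fun s => ln (r + s) / S));
    intros s Hs; rewrite Rmin_left, Rmax_right in Hs by lra.
  - auto_derive; [lra|]. field. lra.
  - apply (ex_derive_continuous (fun s => 1 / (S * (r + s)))). auto_derive. nra.
Qed.

Lemma is_RInt_inv_shift_decr S r m L : 0 < S -> 0 < r -> 0 <= m <= L ->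
  is_RInt (fun s => 1 / (S * (r + L - s))) m L (ln (r + (L - m)) / S - ln r / S).
Proof.
  intros HS Hr Hm.
  replace (ln (r + (L - m)) / S - ln r / S)
    with (minus ((fun s => - ln (r + L - s) / S) L) ((fun s => - ln (r + L - s) / S) m))
    by (unfold minus, plus, opp; simpl; replace (r + L - L) with r by ring;
        replace (r + L - m) with (r + (L - m)) by ring; field; lra).
  apply (is_RInt_derive (fun s => - ln (r + L - s) / S));
    intros s Hs; rewrite Rmin_left, Rmax_right in Hs by lra.
  - auto_derive; [lra|]. field. lra.
  - apply (ex_derive_continuous (fun s => 1 / (S * (r + L - s)))). auto_derive. nra.
Qed.

(* On the first half of the curve [d_G(g0 s) <= S (r + s)], on the second half
   [d_G(g0 s) <= S (r + L - s)]. *)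
Lemma integral_inv_dG_ge_log G x y P1 P2 S r L (g0 : R -> pt)
  (pr : Riemann_integrable (fun s => 1 / dG G (g0 s)) 0 L) :
  0 < S -> 0 < r -> 0 <= L ->
  (forall s, 0 <= s <= L -> G (g0 s) /\ dist (g0 s) x <= s /\ dist (g0 s) y <= L - s) ->
  (forall z, G z -> 0 < dG G z /\ dG G z <= S * dist z P1 /\ dG G z <= S * dist z P2) ->
  dist x P1 = r -> dist y P2 = r ->
  2 / S * ln ((r + L / 2) / r) <= RiemannInt pr.
Proof.
  intros HS Hr HL Hg Hd Hx Hy.
  set (f := fun s => 1 / dG G (g0 s)).
  rewrite <- RInt_Reals. fold f.
  assert (Hex : ex_RInt f 0 L) by (apply ex_RInt_Reals_1; auto).
  assert (E1 : ex_RInt f 0 (L / 2))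
    by (apply (ex_RInt_Chasles_1 (V := R_CompleteNormedModule) f 0 (L / 2) L); auto; lra).
  assert (E2 : ex_RInt f (L / 2) L)
    by (apply (ex_RInt_Chasles_2 (V := R_CompleteNormedModule) f 0 (L / 2) L); auto; lra).
  rewrite <- (RInt_Chasles (V := R_CompleteNormedModule) f 0 (L / 2) L E1 E2).
  pose proof (is_RInt_inv_shift_incr S r (L / 2) HS Hr ltac:(lra)) as I1.
  pose proof (is_RInt_inv_shift_decr S r (L / 2) L HS Hr ltac:(lra)) as I2.
  assert (R1 : RInt (fun s => 1 / (S * (r + s))) 0 (L / 2) <= RInt f 0 (L / 2)).
  { apply RInt_le; [lra | eexists; eauto | auto |].
    intros s Hs. destruct (Hg s ltac:(lra)) as [HG [H1 H2]]. destruct (Hd _ HG) as [D0 [D1 D2]].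
    unfold f, Rdiv. rewrite !Rmult_1_l. apply Rinv_le_contravar; auto.
    pose proof (dist_triangle (g0 s) x P1). nra. }
  assert (R2 : RInt (fun s => 1 / (S * (r + L - s))) (L / 2) L <= RInt f (L / 2) L).
  { apply RInt_le; [lra | eexists; eauto | auto |].
    intros s Hs. destruct (Hg s ltac:(lra)) as [HG [H1 H2]]. destruct (Hd _ HG) as [D0 [D1 D2]].
    unfold f, Rdiv. rewrite !Rmult_1_l. apply Rinv_le_contravar; auto.
    pose proof (dist_triangle (g0 s) y P2). nra. }
  rewrite (is_RInt_unique _ _ _ _ I1) in R1. rewrite (is_RInt_unique _ _ _ _ I2) in R2.
  replace (L - L / 2) with (L / 2) in R2 by field.
  rewrite ln_div by (try apply Rdiv_lt_0_compat; lra).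
  unfold plus. simpl.
  replace (2 / S * (ln (r + L / 2) - ln r))
    with ((ln (r + L / 2) / S - ln r / S) + (ln (r + L / 2) / S - ln r / S)) by (field; lra).
  lra.
Qed.

Lemma qh_length_ge_log G x y P1 P2 S r I : 0 < S -> 0 < r ->
  (forall z, G z -> 0 < dG G z /\ dG G z <= S * dist z P1 /\ dG G z <= S * dist z P2) ->
  dist x P1 = r -> dist y P2 = r -> qh_length_of_curve G x y I ->
  2 / S * ln ((r + dist x y / 2) / r) <= I.
Proof.
  intros HS Hr Hd Hx Hy HI.
  destruct (qh_curve_arc_param G x y I HI) as [L [g0 [pr [<- [HLxy Hg]]]]].
  pose proof (dist_ge0 x y).
  eapply Rle_trans; [| apply (integral_inv_dG_ge_log G x y P1 P2 S r L g0 pr); auto; lra].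
  apply Rmult_le_compat_l; [apply Rlt_le, Rdiv_lt_0_compat; lra|].
  apply ln_le; [apply Rdiv_lt_0_compat; lra|].
  unfold Rdiv. apply Rmult_le_compat_r; [apply Rlt_le, Rinv_0_lt_compat|]; lra.
Qed.

Lemma dG_glb G x : (exists b, boundary G b) ->
  is_glb (fun r => exists z, boundary G z /\ r = dist x z) (dG G x).
Proof.
  intros [b Hb]. apply Rinf_glb; [exists (dist x b), b; auto|].
  exists 0. intros r [z [_ ->]]. apply dist_ge0.
Qed.

Lemma dG_le_dist G x b : boundary G b -> dG G x <= dist x b.
Proof. intros Hb. apply (dG_glb G x (ex_intro _ b Hb)). exists b; auto. Qed.

Lemma dG_ge_ball G x rho : (exists b, boundary G b) ->
  (forall w, dist w x < rho -> G w) -> rho <= dG G x.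
Proof.
  intros Hb Hball. apply (dG_glb G x Hb). intros r [z [[_ Hz] ->]].
  apply Rnot_lt_le. intros Hlt.
  destruct (Hz (rho - dist x z) ltac:(lra)) as [w [Hw Hwz]]. apply Hw, Hball.
  pose proof (dist_triangle w z x). rewrite (dist_sym z x) in *. lra.
Qed.

Lemma dG_lipschitz G z w : (exists b, boundary G b) -> dG G z <= dG G w + dist z w.
Proof.
  intros Hb. enough (dG G z - dist z w <= dG G w) by lra.
  apply (dG_glb G w Hb). intros r [b [Hb' ->]].
  pose proof (dG_le_dist G z b Hb'). pose proof (dist_triangle z w b). lra.
Qed.

Lemma kG_ge G x y K0 : (exists I, qh_length_of_curve G x y I) ->
  (forall I, qh_length_of_curve G x y I -> K0 <= I) -> K0 <= kG G x y.
Proof. intros Hne Hlb. apply (Rinf_glb _ Hne (ex_intro _ K0 Hlb)). auto. Qed.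

Definition segment (x y : pt) (th : R) : pt :=
  (fst x + th * (fst y - fst x), snd x + th * (snd y - snd x)).

Lemma segment_dist x y t1 t2 :
  dist (segment x y t1) (segment x y t2) = Rabs (t1 - t2) * dist y x.
Proof.
  unfold dist, segment. cbn [fst snd].
  rewrite <- sqrt_sq_mult by (pose proof (pow2_ge_0 (fst y - fst x));
                              pose proof (pow2_ge_0 (snd y - snd x)); lra).
  f_equal. ring.
Qed.

Lemma segment_poly_length x y p n : (forall i, (i < n)%nat -> p i <= p (S i)) ->
  poly_length (segment x y) p n = (p n - p O) * dist y x.
Proof.
  induction n as [|n IH]; intros H; unfold poly_length in *; simpl; [ring|].
  rewrite IH by (intros; apply H; lia).
  rewrite segment_dist, Rabs_right by (pose proof (H n ltac:(lia)); lra). ring.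
Qed.

Lemma continuity_pt_lipschitz (h : R -> R) x0 :
  (forall x, Rabs (h x - h x0) <= Rabs (x - x0)) -> continuity_pt h x0.
Proof.
  intros H. unfold continuity_pt, continue_in, limit1_in, limit_in. simpl. unfold R_dist.
  intros eps He. exists eps. split; auto. intros x [_ Hx]. eapply Rle_lt_trans; eauto.
Qed.

Lemma is_length_segment x y th : 0 <= th -> is_length (segment x y) 0 th (th * dist y x).
Proof.
  intros Hth. split; auto. split.
  - intros l [p [n [[H0 [Hn Hm]] ->]]]. rewrite segment_poly_length, H0, Hn by auto. lra.
  - intros m Hm. apply Hm. exists (partition1 0 th), 1%nat. split; [apply partition1P; auto|].
    rewrite poly_length1, segment_dist. unfold partition1. simpl. rewrite Rabs_right; lra.
Qed.

Lemma segment_qh_curve G x y : (exists b, boundary G b) -> x <> y ->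
  (forall th, 0 <= th <= 1 -> G (segment x y th)) -> (forall z, G z -> 0 < dG G z) ->
  exists I, qh_length_of_curve G x y I.
Proof.
  intros Hb Hxy Hseg Hpos.
  set (D := dist y x). assert (HD : 0 < D) by (apply dist_gt0; auto).
  set (g0 := fun s => segment x y (s / D)).
  assert (Hin : forall s, 0 <= s <= D -> G (g0 s)).
  { intros s Hs. apply Hseg. split; [apply Rdiv_le_0_compat; lra|].
    apply Rmult_le_reg_r with D; auto. unfold Rdiv. rewrite Rmult_assoc, Rinv_l; lra. }
  assert (pr : Riemann_integrable (fun s => 1 / dG G (g0 s)) 0 D).
  { apply continuity_implies_RiemannInt; [lra|]. intros s Hs.
    apply (continuity_pt_div (fun _ => 1) (fun s => dG G (g0 s))).
    - apply continuity_pt_const. intros a b; auto.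
    - apply continuity_pt_lipschitz. intros s'.
      assert (Hd : dist (g0 s') (g0 s) = Rabs (s' - s)).
      { unfold g0. rewrite segment_dist. fold D.
        replace (s' / D - s / D) with ((s' - s) / D) by (field; lra).
        unfold Rdiv. rewrite Rabs_mult, Rabs_inv, (Rabs_right D) by lra. field. lra. }
      pose proof (dG_lipschitz G (g0 s') (g0 s) Hb). pose proof (dG_lipschitz G (g0 s) (g0 s') Hb).
      rewrite (dist_sym (g0 s)), Hd in *. unfold Rabs at 1. destruct Rcase_abs; lra.
    - pose proof (Hpos _ (Hin s Hs)). lra. }
  exists (RiemannInt pr), (segment x y), 0, 1. repeat split; try lra.
  - intros t Ht eps He. exists (eps / D). split; [apply Rdiv_lt_0_compat; lra|].
    intros u Hu Hut. rewrite segment_dist. fold D.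
    apply Rmult_lt_reg_r with (/ D); [apply Rinv_0_lt_compat; lra|].
    rewrite Rmult_assoc, Rinv_r by lra. lra.
  - intros; apply Hseg; auto.
  - unfold segment. destruct x; simpl. f_equal; ring.
  - unfold segment. destruct x, y; simpl. f_equal; ring.
  - exists D. split; [rewrite <- (Rmult_1_l D); apply is_length_segment; lra|].
    exists g0. split; [|exists pr; auto].
    intros t s Ht Hts. unfold g0. f_equal.
    assert (s = t * D) as ->
      by exact (is_lub_u _ _ _ (proj2 Hts) (proj2 (is_length_segment x y t ltac:(lra)))).
    field. lra.
Qed.

Definition frame (P u v : pt) (s t : R) : pt :=
  (fst P + s * fst u + t * fst v, snd P + s * snd u + t * snd v).

Definition opp_pt (w : pt) : pt := (- fst w, - snd w).

Lemma frame_00 P u v : frame P u v 0 0 = P.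
Proof. unfold frame. destruct P. simpl. f_equal; ring. Qed.

Lemma frame_swap P u v s t : frame P u v s t = frame P v u t s.
Proof. unfold frame. f_equal; ring. Qed.

Lemma rhombus_frame P u v s t : 0 < s < 1 -> 0 < t < 1 -> rhombus P u v (frame P u v s t).
Proof. intros. exists s, t. auto. Qed.

Lemma pred_ext (X Y : pt -> Prop) : (forall z, X z <-> Y z) -> X = Y.
Proof. intros H. apply functional_extensionality. intros z. apply propositional_extensionality. auto. Qed.

Lemma rhombus_swap P u v : rhombus P u v = rhombus P v u.
Proof.
  apply pred_ext. intros z; split; intros [s [t [Hs [Ht ->]]]];
    exists t, s; repeat split; try lra; unfold frame; simpl; f_equal; ring.
Qed.

Lemma rhombus_flip P u v : rhombus P u v = rhombus (frame P u v 1 1) (opp_pt u) (opp_pt v).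
Proof.
  apply pred_ext. intros z; split; intros [s [t [Hs [Ht ->]]]];
    exists (1 - s), (1 - t); repeat split; try lra; unfold frame, opp_pt; simpl; f_equal; ring.
Qed.

Lemma rhombus_shift P u v : rhombus P u v = rhombus (frame P u v 1 0) (opp_pt u) v.
Proof.
  apply pred_ext. intros z; split; intros [s [t [Hs [Ht ->]]]];
    exists (1 - s), t; repeat split; try lra; unfold frame, opp_pt; simpl; f_equal; ring.
Qed.

Lemma norm2_ge0 u : 0 <= norm2 u.
Proof. apply sqrt_pos. Qed.

Lemma norm2_dot u : norm2 u = sqrt (dot u u).
Proof. unfold norm2, dot. f_equal. ring. Qed.

Lemma det_le_norm2 u v : Rabs (det u v) <= norm2 u * norm2 v.
Proof.
  unfold norm2, det. rewrite <- sqrt_mult by nra.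
  rewrite <- sqrt_Rsqr_abs. apply sqrt_le_1_alt. unfold Rsqr.
  pose proof (pow2_ge_0 (fst u * fst v + snd u * snd v)). nra.
Qed.

Lemma dist_frame P u v s t s' t' :
  dist (frame P u v s t) (frame P u v s' t') =
  sqrt ((s - s') ^ 2 * dot u u + (t - t') ^ 2 * dot v v + 2 * (s - s') * (t - t') * dot u v).
Proof. unfold dist, frame, dot. cbn [fst snd]. f_equal. ring. Qed.

Lemma dist_frame_s P u v s t s' :
  dist (frame P u v s t) (frame P u v s' t) = Rabs (s - s') * norm2 u.
Proof.
  unfold dist, frame, norm2. cbn [fst snd].
  rewrite <- sqrt_sq_mult by nra. f_equal. ring.
Qed.

Lemma dist_frame_le P u v s t s' t' :
  dist (frame P u v s t) (frame P u v s' t') <= Rabs (s - s') * norm2 u + Rabs (t - t') * norm2 v.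
Proof.
  rewrite <- (dist_frame_s P u v s t s'), (frame_swap P u v s' t), (frame_swap P u v s' t'),
    <- (dist_frame_s P v u t s' t').
  rewrite (frame_swap P v u t s'). apply dist_triangle.
Qed.

Section Frame.

Variables P u v : pt.
Hypothesis Hdet : det u v <> 0.

Lemma frame_inj s t s' t' : frame P u v s t = frame P u v s' t' -> s = s' /\ t = t'.
Proof.
  intros H. unfold frame, det in *. injection H as H1 H2.
  assert (A1 : (s - s') * fst u + (t - t') * fst v = 0) by lra.
  assert (A2 : (s - s') * snd u + (t - t') * snd v = 0) by lra.
  assert (E1 : (s - s') * (fst u * snd v - snd u * fst v) = 0).
  { transitivity (snd v * ((s - s') * fst u + (t - t') * fst v)
                  - fst v * ((s - s') * snd u + (t - t') * snd v)); [ring|].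
    rewrite A1, A2. ring. }
  assert (E2 : (t - t') * (fst u * snd v - snd u * fst v) = 0).
  { transitivity (fst u * ((s - s') * snd u + (t - t') * snd v)
                  - snd u * ((s - s') * fst u + (t - t') * fst v)); [ring|].
    rewrite A1, A2. ring. }
  apply Rmult_integral in E1, E2.
  split; [destruct E1 | destruct E2]; (lra || contradiction).
Qed.

Lemma rhombus_frame_inv s t : rhombus P u v (frame P u v s t) -> 0 < s < 1 /\ 0 < t < 1.
Proof. intros [s' [t' [Hs [Ht E]]]]. apply frame_inj in E as [-> ->]. auto. Qed.

Lemma rhombus_approx_inside s t : 0 <= s <= 1 -> 0 <= t <= 1 ->
  forall eps, 0 < eps -> exists w, rhombus P u v w /\ dist w (frame P u v s t) < eps.
Proof.
  intros Hs Ht eps He.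
  set (z := frame P u v s t). set (C := frame P u v (1 / 2) (1 / 2)).
  pose proof (dist_ge0 C z).
  set (d := Rmin (1 / 2) (eps / (dist C z + 1))).
  assert (Hd0 : 0 < d) by (apply Rmin_pos; [lra | apply Rdiv_lt_0_compat; lra]).
  assert (Hd1 : d <= 1 / 2) by apply Rmin_l.
  assert (Hd2 : d * (dist C z + 1) <= eps).
  { pose proof (Rmin_r (1 / 2) (eps / (dist C z + 1))) as Hd2. fold d in Hd2.
    apply Rmult_le_reg_r with (/ (dist C z + 1)); [apply Rinv_0_lt_compat; lra|].
    rewrite Rmult_assoc, Rinv_r by lra. lra. }
  exists (segment z C d). split.
  - replace (segment z C d) with (frame P u v (s + d * (1 / 2 - s)) (t + d * (1 / 2 - t)))
      by (unfold segment, z, C, frame; simpl; f_equal; ring).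
    apply rhombus_frame; nra.
  - replace z with (segment z C 0) at 2 by (unfold segment; destruct z; simpl; f_equal; ring).
    rewrite segment_dist, Rminus_0_r, Rabs_right by lra. nra.
Qed.

Lemma rhombus_approx_outside s t : 0 <= s <= 1 -> 0 <= t <= 1 ->
  (s = 0 \/ s = 1 \/ t = 0 \/ t = 1) ->
  forall eps, 0 < eps -> exists w, ~ rhombus P u v w /\ dist w (frame P u v s t) < eps.
Proof.
  intros Hs Ht Hside eps He.
  set (d := eps / (2 * (norm2 u + norm2 v + 1))).
  pose proof (norm2_ge0 u). pose proof (norm2_ge0 v).
  assert (Hd0 : 0 < d) by (apply Rdiv_lt_0_compat; lra).
  assert (Hnear : forall s' t', Rabs (s' - s) <= d -> Rabs (t' - t) <= d ->
                    dist (frame P u v s' t') (frame P u v s t) < eps).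
  { intros s' t' H1 H2. eapply Rle_lt_trans; [apply dist_frame_le|].
    assert (d * (norm2 u + norm2 v + 1) < eps); [|nra].
    unfold d. replace (eps / (2 * (norm2 u + norm2 v + 1)) * (norm2 u + norm2 v + 1))
      with (eps / 2) by (field; lra). lra. }
  destruct Hside as [-> | [-> | [-> | ->]]];
    [exists (frame P u v (- d) t) | exists (frame P u v (1 + d) t)
    | exists (frame P u v s (- d)) | exists (frame P u v s (1 + d))];
    (split; [intros Hr; apply rhombus_frame_inv in Hr; lra|]);
    apply Hnear; unfold Rabs; repeat destruct Rcase_abs; lra.
Qed.

Lemma boundary_frame s t : 0 <= s <= 1 -> 0 <= t <= 1 ->
  (s = 0 \/ s = 1 \/ t = 0 \/ t = 1) -> boundary (rhombus P u v) (frame P u v s t).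
Proof.
  intros Hs Ht Hside. split; [apply rhombus_approx_inside | apply rhombus_approx_outside]; auto.
Qed.

Lemma rhombus_has_boundary : exists b, boundary (rhombus P u v) b.
Proof. exists (frame P u v 0 0). apply boundary_frame; lra. Qed.

(* Cramer's rule gives the frame coordinates of [w], and they differ from [s], [t]
   by at most [dist w z * a / |det u v|]. *)
Lemma rhombus_ball a s t m : norm2 u <= a -> norm2 v <= a ->
  0 < m -> m <= s <= 1 - m -> m <= t <= 1 - m ->
  forall w, dist w (frame P u v s t) * a < m * Rabs (det u v) -> rhombus P u v w.
Proof.
  intros Hu Hv Hm Hs Ht w Hw.
  assert (Hdp : 0 < Rabs (det u v)) by (apply Rabs_pos_lt; auto).
  set (z := frame P u v s t) in *. set (D1 := fst w - fst z). set (D2 := snd w - snd z).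
  assert (Hw' : w = frame P u v (s + det (D1, D2) v / det u v) (t + det u (D1, D2) / det u v)).
  { destruct w as [w1 w2]. unfold frame, D1, D2, z, frame, det in *. cbn [fst snd] in *.
    f_equal; field; auto. }
  assert (HD : dist w z = norm2 (D1, D2)) by reflexivity.
  assert (Hcoord : forall X, Rabs X <= dist w z * a -> Rabs (X / det u v) < m).
  { intros X HX. unfold Rdiv. rewrite Rabs_mult, Rabs_inv.
    apply Rmult_lt_reg_r with (Rabs (det u v)); auto. rewrite Rmult_assoc, Rinv_l; lra. }
  pose proof (dist_ge0 w z).
  assert (K1 : Rabs (det (D1, D2) v / det u v) < m).
  { apply Hcoord. rewrite HD. eapply Rle_trans; [apply det_le_norm2|].
    apply Rmult_le_compat_l; [apply norm2_ge0 | auto]. }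
  assert (K2 : Rabs (det u (D1, D2) / det u v) < m).
  { apply Hcoord. rewrite HD. eapply Rle_trans; [apply det_le_norm2|].
    rewrite Rmult_comm. apply Rmult_le_compat_l; [apply norm2_ge0 | auto]. }
  rewrite Hw'. apply rhombus_frame;
    [revert K1 | revert K2]; unfold Rabs; destruct Rcase_abs; intros; lra.
Qed.

Lemma dG_rhombus_ge a s t m : norm2 u <= a -> norm2 v <= a -> 0 < a ->
  0 < m -> m <= s <= 1 - m -> m <= t <= 1 - m ->
  m * Rabs (det u v) / a <= dG (rhombus P u v) (frame P u v s t).
Proof.
  intros Hu Hv Ha Hm Hs Ht. apply dG_ge_ball; [apply rhombus_has_boundary|].
  intros w Hw. apply (rhombus_ball a s t m); auto.
  apply Rmult_lt_reg_r with (/ a); [apply Rinv_0_lt_compat; auto|].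
  rewrite Rmult_assoc, Rinv_r by lra. lra.
Qed.

Lemma dG_rhombus_pos z : rhombus P u v z -> 0 < dG (rhombus P u v) z.
Proof.
  intros [s [t [Hs [Ht ->]]]].
  set (m := Rmin (Rmin s (1 - s)) (Rmin t (1 - t))).
  assert (Hm : 0 < m) by (unfold m; repeat apply Rmin_pos; lra).
  assert (m <= s /\ m <= 1 - s /\ m <= t /\ m <= 1 - t).
  { unfold m. pose proof (Rmin_l (Rmin s (1 - s)) (Rmin t (1 - t))).
    pose proof (Rmin_r (Rmin s (1 - s)) (Rmin t (1 - t))).
    pose proof (Rmin_l s (1 - s)). pose proof (Rmin_r s (1 - s)).
    pose proof (Rmin_l t (1 - t)). pose proof (Rmin_r t (1 - t)). lra. }
  pose proof (norm2_ge0 u). pose proof (norm2_ge0 v).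
  assert (Hdp : 0 < Rabs (det u v)) by (apply Rabs_pos_lt; auto).
  eapply Rlt_le_trans; [|apply (dG_rhombus_ge (norm2 u + norm2 v + 1) s t m); lra].
  apply Rdiv_lt_0_compat; [apply Rmult_lt_0_compat|]; lra.
Qed.

End Frame.

(* With [N = |u|^2 = |v|^2] and [c = cos] of the angle at [P], the squared distances from
   [frame P u v s t] to [frame P u v (s - mu) (t + mu c)] and to [P] are [N mu^2 (1 - c^2)]
   and [N (s^2 + t^2 + 2 s t c)]. *)
Lemma half_angle_ineq mu s t c : 0 <= mu <= s -> s <= t -> 0 <= c < 1 ->
  mu ^ 2 * (1 - c ^ 2) <= (1 - c) / 2 * (s ^ 2 + t ^ 2 + 2 * s * t * c).
Proof.
  intros Hm Hst Hc.
  assert (mu ^ 2 <= s ^ 2) by nra.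
  assert (0 <= (t - s) * (t + s)) by (apply Rmult_le_pos; lra).
  assert (0 <= c * s * (t - s)) by (apply Rmult_le_pos; [apply Rmult_le_pos|]; lra).
  assert (0 <= (1 - c) * ((t ^ 2 - s ^ 2) + 2 * c * s * (t - s))) by (apply Rmult_le_pos; nra).
  assert (0 <= (s ^ 2 - mu ^ 2) * (1 - c ^ 2)) by (apply Rmult_le_pos; nra).
  nra.
Qed.

Section VertexDistance.

Variables (P u v : pt) (N c S : R).
Hypothesis Hdet : det u v <> 0.
Hypotheses (Hu : dot u u = N) (Hv : dot v v = N) (Huv : dot u v = c * N).
Hypothesis Hc : 0 <= c < 1.
Hypotheses (HS : 0 < S) (HS2 : S ^ 2 = (1 - c) / 2).

(* The boundary point is reached from [z] in the direction [- u + c v], orthogonal to [v]: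
   it is the foot of [z] on the side [s = 0] unless the side [t = 1] is hit first. *)
Lemma boundary_near_vertex s t : 0 < s < 1 -> 0 < t < 1 -> s <= t ->
  exists b, boundary (rhombus P u v) b /\ dist (frame P u v s t) b <= S * dist (frame P u v s t) P.
Proof.
  intros Hs Ht Hst.
  assert (HN : 0 <= N) by (rewrite <- Hu; unfold dot; nra).
  assert (Hmu : exists mu, 0 <= mu <= s /\ 0 <= t + mu * c <= 1 /\ (s - mu = 0 \/ t + mu * c = 1)).
  { destruct (Rle_dec (t + s * c) 1).
    - exists s. split; [lra|]. split; [nra|]. left; ring.
    - assert (Hc0 : 0 < c) by nra. exists ((1 - t) / c).
      assert (E : (1 - t) / c * c = 1 - t) by (field; lra).
      assert (0 <= (1 - t) / c) by (apply Rdiv_le_0_compat; lra).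
      assert ((1 - t) / c <= s) by (apply Rmult_le_reg_r with c; lra).
      split; [lra|]. split; [lra|]. right; lra. }
  destruct Hmu as [mu [H1 [H2 H3]]].
  exists (frame P u v (s - mu) (t + mu * c)). split; [apply boundary_frame; auto; lra|].
  replace (dist (frame P u v s t) P) with (dist (frame P u v s t) (frame P u v 0 0))
    by (rewrite frame_00; auto).
  rewrite !dist_frame, Hu, Hv, Huv.
  assert (0 <= s * t * c) by (apply Rmult_le_pos; [apply Rmult_le_pos|]; lra).
  rewrite <- (Rabs_pos_eq S), <- sqrt_sq_mult by nra.
  apply sqrt_le_1_alt. rewrite HS2.
  pose proof (half_angle_ineq mu s t c H1 Hst Hc). nra.
Qed.

End VertexDistance.

Lemma dG_le_vertex P u v N c S : det u v <> 0 ->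
  dot u u = N -> dot v v = N -> dot u v = c * N -> 0 <= c < 1 -> 0 < S -> S ^ 2 = (1 - c) / 2 ->
  forall z, rhombus P u v z -> dG (rhombus P u v) z <= S * dist z P.
Proof.
  intros Hd Hu Hv Huv Hc HS HS2 z [s [t [Hs [Ht ->]]]]. fold (frame P u v s t).
  destruct (Rle_dec s t).
  - destruct (boundary_near_vertex P u v N c S Hd Hu Hv Huv Hc HS HS2 s t) as [b [Hb Hdb]]; auto.
    pose proof (dG_le_dist _ (frame P u v s t) b Hb). lra.
  - assert (Hd' : det v u <> 0) by (intros E; apply Hd; unfold det in *; lra).
    assert (Hvu : dot v u = c * N) by (rewrite <- Huv; unfold dot; ring).
    destruct (boundary_near_vertex P v u N c S Hd' Hv Hu Hvu Hc HS HS2 t s) as [b [Hb Hdb]];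
      auto; try lra.
    rewrite <- frame_swap in Hdb. rewrite <- rhombus_swap in Hb.
    pose proof (dG_le_dist _ (frame P u v s t) b Hb). lra.
Qed.

Lemma le_of_affine_le a b c d l0 : (forall l, l0 < l -> a * l - b <= c * l + d) -> a <= c.
Proof.
  intros H. apply Rnot_lt_le. intros Hca.
  set (l := Rmax l0 ((b + d) / (a - c)) + 1).
  assert (l0 < l) by (unfold l; pose proof (Rmax_l l0 ((b + d) / (a - c))); lra).
  assert ((b + d) / (a - c) < l) by (unfold l; pose proof (Rmax_r l0 ((b + d) / (a - c))); lra).
  assert (b + d < (a - c) * l).
  { apply Rmult_lt_reg_r with (/ (a - c)); [apply Rinv_0_lt_compat; lra|].
    rewrite (Rmult_comm (a - c)), Rmult_assoc, Rinv_r by lra. lra. }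
  specialize (H l ltac:(assumption)). nra.
Qed.

Section AcuteRhombus.

Variables (P u v : pt) (N c S : R).
Hypothesis Hdet : det u v <> 0.
Hypotheses (Hu : dot u u = N) (Hv : dot v v = N) (Huv : dot u v = c * N).
Hypothesis Hc : 0 <= c < 1.
Hypotheses (HS : 0 < S) (HS2 : S ^ 2 = (1 - c) / 2).

Let G := rhombus P u v.
Let Q := frame P u v 1 1.
Let diag (t : R) : pt := frame P u v t t.

Lemma dG_le_vertices z : G z -> 0 < dG G z /\ dG G z <= S * dist z P /\ dG G z <= S * dist z Q.
Proof.
  intros Hz. split; [|split].
  - apply dG_rhombus_pos; auto.
  - apply (dG_le_vertex P u v N c S); auto.
  - unfold G in *. rewrite rhombus_flip in Hz |- *. fold Q in Hz |- *.
    apply (dG_le_vertex Q (opp_pt u) (opp_pt v) N c S); auto;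
      [unfold det, opp_pt in *; simpl; lra | ..];
      unfold dot, opp_pt in *; simpl; lra.
Qed.

Lemma diag_segment t : diag t = segment P Q t.
Proof. unfold diag, Q, segment, frame. simpl. f_equal; ring. Qed.

Lemma dist_diag t1 t2 : dist (diag t1) (diag t2) = Rabs (t1 - t2) * dist Q P.
Proof. rewrite !diag_segment. apply segment_dist. Qed.

Lemma dist_QP_gt0 : 0 < dist Q P.
Proof.
  apply dist_gt0. intros E.
  assert (E' : frame P u v 1 1 = frame P u v 0 0) by (rewrite frame_00; exact E).
  apply frame_inj in E' as [E' _]; auto. lra.
Qed.

Lemma kG_diag_ge tau : 0 < tau < 1 / 2 ->
  2 / S * - ln (2 * tau) <= kG G (diag tau) (diag (1 - tau)).
Proof.
  intros Htau. pose proof dist_QP_gt0.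
  assert (HxP : dist (diag tau) P = tau * dist Q P).
  { replace (dist (diag tau) P) with (dist (diag tau) (diag 0)) by (unfold diag; rewrite frame_00; auto).
    rewrite dist_diag, Rabs_right; lra. }
  assert (HyQ : dist (diag (1 - tau)) Q = tau * dist Q P).
  { replace (dist (diag (1 - tau)) Q) with (dist (diag (1 - tau)) (diag 1)) by reflexivity.
    rewrite dist_diag, Rabs_left1; lra. }
  assert (Hxy : dist (diag tau) (diag (1 - tau)) = (1 - 2 * tau) * dist Q P)
    by (rewrite dist_diag, Rabs_left1; lra).
  apply kG_ge.
  - apply segment_qh_curve.
    + apply rhombus_has_boundary; auto.
    + intros E. apply frame_inj in E as [E _]; auto. lra.
    + intros th Hth. replace (segment (diag tau) (diag (1 - tau)) th)
        with (diag (tau + th * (1 - 2 * tau))) by (unfold diag, frame, segment; simpl; f_equal; ring).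
      apply rhombus_frame; nra.
    + intros z Hz. apply dG_le_vertices; auto.
  - intros I HI. eapply Rle_trans;
      [| apply (qh_length_ge_log G (diag tau) (diag (1 - tau)) P Q S (tau * dist Q P) I);
         auto; try nra; apply dG_le_vertices].
    rewrite Hxy.
    replace ((tau * dist Q P + (1 - 2 * tau) * dist Q P / 2) / (tau * dist Q P))
      with (/ (2 * tau)) by (field; split; lra).
    rewrite ln_Rinv by lra. lra.
Qed.

Lemma jG_diag_le tau : 0 < tau < 1 / 2 ->
  jG G (diag tau) (diag (1 - tau)) <= - ln tau + ln (1 + dist Q P / (Rabs (det u v) / sqrt N)).
Proof.
  intros Htau. pose proof dist_QP_gt0.
  assert (HN : 0 < N).
  { rewrite <- Hu. unfold dot. destruct (Req_dec (fst u) 0), (Req_dec (snd u) 0); try nra.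
    exfalso. apply Hdet. unfold det. rewrite H0, H1. ring. }
  set (K := Rabs (det u v) / sqrt N).
  assert (HK : 0 < K) by (apply Rdiv_lt_0_compat; [apply Rabs_pos_lt | apply sqrt_lt_R0]; auto).
  assert (Hnorm : forall w, dot w w = N -> norm2 w <= sqrt N) by (intros w Hw; rewrite norm2_dot, Hw; lra).
  assert (Hmin : tau * K <= Rmin (dG G (diag tau)) (dG G (diag (1 - tau)))).
  { replace (tau * K) with (tau * Rabs (det u v) / sqrt N) by (unfold K, Rdiv; ring).
    apply Rmin_glb; apply dG_rhombus_ge; auto; try apply sqrt_lt_R0; lra. }
  unfold jG. rewrite dist_diag, Rabs_left1 by lra.
  assert (Hle : (1 - 2 * tau) * dist Q P / Rmin (dG G (diag tau)) (dG G (diag (1 - tau)))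
                <= dist Q P / (tau * K)).
  { unfold Rdiv. apply Rmult_le_compat; try nra.
    - apply Rlt_le, Rinv_0_lt_compat. nra.
    - apply Rinv_le_contravar; nra. }
  assert (H0 : 0 <= (1 - 2 * tau) * dist Q P / Rmin (dG G (diag tau)) (dG G (diag (1 - tau))))
    by (apply Rdiv_le_0_compat; nra).
  assert (H2 : 1 + dist Q P / (tau * K) <= (1 + dist Q P / K) / tau).
  { replace ((1 + dist Q P / K) / tau) with (/ tau + dist Q P / (tau * K)) by (field; lra).
    assert (1 <= / tau) by (rewrite <- Rinv_1; apply Rinv_le_contravar; lra). lra. }
  assert (0 < dist Q P / K) by (apply Rdiv_lt_0_compat; auto).
  rewrite <- ln_Rinv, <- ln_mult by (try apply Rinv_0_lt_compat; lra).
  apply ln_le; [lra|]. unfold Rdiv in H2. lra.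
Qed.

Lemma uniformity_bound_ge A : uniformity_bound G A -> 2 / S <= A.
Proof.
  intros [HA1 HA].
  set (B := ln (1 + dist Q P / (Rabs (det u v) / sqrt N))).
  apply (le_of_affine_le (2 / S) (2 / S * ln 2) A (A * B) (ln 2)). intros lam Hlam.
  set (tau := exp (- lam)).
  assert (Htau : 0 < tau < 1 / 2).
  { split; [apply exp_pos|]. unfold tau. rewrite <- (exp_ln (1 / 2)) by lra.
    apply exp_increasing. unfold Rdiv. rewrite Rmult_1_l, ln_Rinv; lra. }
  assert (Hlam' : ln tau = - lam) by apply ln_exp.
  pose proof (kG_diag_ge tau Htau) as Hk. pose proof (jG_diag_le tau Htau) as Hj.
  rewrite ln_mult, Hlam' in Hk by lra. rewrite Hlam' in Hj. fold B in Hj.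
  assert (Hxy : kG G (diag tau) (diag (1 - tau)) <= A * jG G (diag tau) (diag (1 - tau)))
    by (apply HA; apply rhombus_frame; lra).
  assert (A * jG G (diag tau) (diag (1 - tau)) <= A * (- - lam + B))
    by (apply Rmult_le_compat_l; lra).
  lra.
Qed.

End AcuteRhombus.

Lemma Rabs_dot_lt_norm2 u v : det u v <> 0 -> Rabs (dot u v) < norm2 u * norm2 v.
Proof.
  intros Hd. rewrite !norm2_dot, <- sqrt_mult, <- sqrt_Rsqr_abs by (unfold dot; nra).
  apply sqrt_lt_1_alt. assert (0 < det u v * det u v) by (apply Rsqr_pos_lt; auto).
  assert (dot u u * dot v v = dot u v * dot u v + det u v * det u v)
    by (unfold dot, det; ring).
  split; [apply Rle_0_sqr|]. unfold Rsqr. lra.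
Qed.

Theorem theorem5p4 (P u v : pt) (alpha : R) :
  norm2 u = norm2 v -> 0 < norm2 u -> det u v <> 0 ->
  0 < alpha <= PI / 2 ->
  cos alpha = Rabs (dot u v) / (norm2 u * norm2 v) ->
  forall A : R, uniformity_bound (rhombus P u v) A ->
  2 / sin (alpha / 2) <= A.
Proof.
  intros Huv Hu0 Hdet Halpha Hcos A HA.
  set (N := norm2 u * norm2 v) in Hcos |- *.
  assert (Hu : dot u u = N)
    by (unfold N; rewrite <- Huv, norm2_dot, sqrt_sqrt; unfold dot; nra).
  assert (Hv : dot v v = N)
    by (unfold N; rewrite Huv, norm2_dot, sqrt_sqrt; unfold dot; nra).
  assert (HN : 0 < N) by (unfold N; rewrite <- Huv; nra).
  set (c := cos alpha) in *.
  assert (Habs : Rabs (dot u v) = c * N) by (rewrite Hcos; field; lra).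
  assert (Hc : 0 <= c < 1).
  { pose proof (Rabs_pos (dot u v)). pose proof (Rabs_dot_lt_norm2 u v Hdet) as Hlt. fold N in Hlt. nra. }
  assert (HS : 0 < sin (alpha / 2)) by (apply sin_gt_0; pose proof PI_RGT_0; lra).
  assert (HS2 : sin (alpha / 2) ^ 2 = (1 - c) / 2).
  { unfold c. replace alpha with (2 * (alpha / 2)) at 2 by field. rewrite cos_2a_sin. field. }
  destruct (Rle_dec 0 (dot u v)).
  - apply (uniformity_bound_ge P u v N c); auto. rewrite <- Habs, Rabs_right; lra.
  - rewrite rhombus_shift in HA.
    apply (uniformity_bound_ge (frame P u v 1 0) (opp_pt u) v N c); auto;
      unfold det, dot, opp_pt in *; simpl in *.
    + intros E. apply Hdet. lra.
    + lra.
    + rewrite Rabs_left in Habs; lra.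
Qed.
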